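(* Let $V$ be a finite ground set, let $(V,\mathcal{F})$ be a matroid whose largest independent set has cardinality $K$, and let $f:2^V\to\mathbb{R}$ be nondecreasing with submodularity ratio $\gamma$. Let $S^*\in\arg\max_{S\in\mathcal{F}} f(S)$ and let $S^{\mathrm{G}}$ be the output of the greedy algorithm described below. Then $$\frac{f(S^{\mathrm{G}})-f(\emptyset)}{f(S^* )-f(\emptyset)}\ \ge\ \frac{\gamma^3}{\gamma^3+1}.$$
   Context: $f$ is nondecreasing if $f(S_1)\le f(S_2)$ for all $S_1\subsetneqq S_2\subset V$. For $S,U\subset V$ let $\rho_U(S)=f(S\cup U)-f(S)$, and write $\rho_\omega(S)=\rho_{\{\omega\}}(S)$. The submodularity ratio of a nondecreasing $f$ is the largest $\gamma\in\mathbb{R}_+$ such that $\gamma\,\rho_\omega(S\cup U)\le\rho_\omega(S)$ for all $S,U\subset V$ and all $\omega\in V$. A matroid $(V,\mathcal{F})$: $\emptyset\in\mathcal{F}$; $\mathcal{F}$ is closed under taking subsets; and if $S_1,S_2\in\mathcal{F}$ with $|S_1|<|S_2|$ there is $\omega\in S_2\setminus S_1$ with $S_1\cup\{\omega\}\in\mathcal{F}$. Greedy algorithm: set $S=\emptyset$, $U=\emptyset$. While $U\neq V$: choose $i\in\arg\max_{i\in V\setminus U}\rho_i(S)$; if $S\cup\{i\}\notin\mathcal{F}$, set $U\leftarrow U\cup\{i\}$; otherwise set $S\leftarrow S\cup\{i\}$ and $U\leftarrow U\cup\{i\}$. When $U=V$, output $S^{\mathrm{G}}=S$. The ratio in the claim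 is considered when $f(S^* )\neq f(\emptyset)$. *)

From HB Require Import structures.
From mathcomp Require Import all_boot all_order all_algebra.
Set Implicit Arguments. Unset Strict Implicit. Unset Printing Implicit Defensive.
Import Order.TTheory GRing.Theory Num.Theory.
Local Open Scope ring_scope.

Section Defs.
Variables (R : realFieldType) (T : finType).

Definition nondecreasing_setfun (f : {set T} -> R) : Prop :=
  forall S1 S2 : {set T}, S1 \proper S2 -> f S1 <= f S2.

Definition rho (f : {set T} -> R) (U S : {set T}) : R := f (S :|: U) - f S.

Definition rho1 (f : {set T} -> R) (w : T) (S : {set T}) : R := rho f [set w] S.

Definition subm_ratio_ok (f : {set T} -> R) (g : R) : Prop :=
  forall (S U : {set T}) (w : T), g * rho1 f w (S :|: U) <= rho1 f w S.

Definition is_submodularity_ratio (f : {set T} -> R) (g : R) : Prop :=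
  [/\ 0 <= g, subm_ratio_ok f g &
      forall g' : R, 0 <= g' -> subm_ratio_ok f g' -> g' <= g].

Definition is_matroid (F : {set {set T}}) : Prop :=
  [/\ set0 \in F,
      (forall S1 S2 : {set T}, S1 \subset S2 -> S2 \in F -> S1 \in F) &
      (forall S1 S2 : {set T}, S1 \in F -> S2 \in F -> #|S1| < #|S2| ->
         exists2 w, w \in S2 :\: S1 & w |: S1 \in F)]%N.

Definition max_indep_card (F : {set {set T}}) (K : nat) : Prop :=
  (exists2 S, S \in F & #|S| = K) /\ (forall S, S \in F -> #|S| <= K)%N.

(* Reachable states (S, U) of the greedy algorithm, for any tie-breaking
   in the argmax.  One step: pick i in V \ U maximizing rho_i(S); add i to U,
   and add i to S iff S ∪ {i} is independent. *)
Inductive greedy_reach (F : {set {set T}}) (f : {set T} -> R)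
  : {set T} -> {set T} -> Prop :=
| greedy_init : greedy_reach F f set0 set0
| greedy_step (S U : {set T}) (i : T) :
    greedy_reach F f S U ->
    i \notin U ->
    (forall j, j \notin U -> rho1 f j S <= rho1 f i S) ->
    greedy_reach F f (if i |: S \in F then i |: S else S) (i |: U).

Definition greedy_output (F : {set {set T}}) (f : {set T} -> R) (SG : {set T}) : Prop :=
  greedy_reach F f SG [set: T].

End Defs.

From HB Require Import structures.
From mathcomp Require Import all_boot all_order all_algebra.
From mathcomp Require Import lra.
Set Implicit Arguments.
Unset Strict Implicit.
Unset Printing Implicit Defensive.
Import Order.TTheory GRing.Theory Num.Theory.
Local Open Scope ring_scope.

(* Greedy invariant: once greedy has picked the independent set S, every
   independent I with |I| <= |S| satisfies gamma rho_I(Y) <= f(S) - f(0) for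
   all Y containing S.  When S grows by the greedy choice i and |I| = |S| + 1,
   the exchange axiom gives o in I \ S with S + o independent; o has not been
   rejected yet, so rho_o(S) <= rho_i(S), while the submodularity ratio bounds
   gamma rho_o(Y + (I - o)) by rho_o(S).  The greedy output is a basis, so
   taking I = Sstar and Y = SG yields gamma (f(Sstar) - f(SG)) <= f(SG) - f(0):
   the ratio is at least gamma/(gamma+1), which dominates gamma^3/(gamma^3+1)
   because gamma <= 1 as soon as f is not constant. *)

Lemma ratio_ge_cube (R : realFieldType) (g a b : R) :
  0 <= g <= 1 -> 0 < b -> g * (b - a) <= a -> g ^+ 3 / (g ^+ 3 + 1) <= a / b.
Proof.
move=> /andP[g_ge0 g_le1] b_gt0 le_gba.
have g3_ge0 : 0 <= g ^+ 3 by rewrite exprn_ge0.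
have a_ge0 : 0 <= a by nra.
have le_g3ba : g ^+ 2 * (g * (b - a)) <= a.
  apply: le_trans (ler_wpM2l (exprn_ge0 2 g_ge0) le_gba) _.
  by rewrite ler_piMl // exprn_ile1.
rewrite ler_pdivlMr // mulrAC ler_pdivrMr ?ltr_wpDl // exprSr.
nra.
Qed.

Section GreedyMatroid.
Variables (R : realFieldType) (T : finType).
Implicit Types (f : {set T} -> R) (A B S : {set T}).

Lemma nondecreasing_subset f A B :
  nondecreasing_setfun f -> A \subset B -> f A <= f B.
Proof.
move=> f_nd sAB; have [->|neAB] := eqVneq A B; first by [].
by apply: f_nd; rewrite properEneq neAB.
Qed.

Lemma rho1_ge0 f w S : nondecreasing_setfun f -> 0 <= rho1 f w S.
Proof. by move=> f_nd; rewrite subr_ge0 (nondecreasing_subset f_nd) ?subsetUl. Qed.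

Lemma rho1_eq0_const f A : (forall w S, rho1 f w S = 0) -> f A = f set0.
Proof.
move=> rho0; elim: {A}_.+1 {-2}A (ltnSn #|A|) => // n IHn A ltAn.
have [->|[x xA]] := set_0Vmem A; first by [].
have := rho0 x (A :\ x); rewrite /rho1 /rho setUC setD1K // => /eqP.
rewrite subr_eq0 => /eqP ->; apply: IHn.
by move: ltAn; rewrite (cardsD1 x A) xA.
Qed.

Lemma subm_ratio_le1 f g A :
  nondecreasing_setfun f -> subm_ratio_ok f g -> f A != f set0 -> g <= 1.
Proof.
move=> f_nd f_g; apply: contraNle => g_gt1; apply/eqP/rho1_eq0_const => w S.
have := f_g S set0 w; rewrite setU0 => le_gr.
have := rho1_ge0 w S f_nd; nra.
Qed.

Section Greedy.
Variables (F : {set {set T}}) (f : {set T} -> R) (g : R).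
Hypotheses (F_matroid : is_matroid F) (f_nd : nondecreasing_setfun f).
Hypothesis f_g : subm_ratio_ok f g.
Implicit Types (I U Y : {set T}).

Lemma greedy_reach_indep S U : greedy_reach F f S U ->
  [/\ S \in F, S \subset U & forall x, x \in U :\: S -> x |: S \notin F].
Proof.
case: F_matroid => F0 F_sub _; elim=> [|{}S {}U i _ [SF sSU rejU] iU _].
  by split=> //; move=> x; rewrite setDv inE.
have iS : i \notin S by apply: contra iU; apply: (subsetP sSU).
case: ifP => iSF; split=> //.
- exact: setUS.
- move=> x; rewrite !inE negb_or => /andP[/andP[xi xS] /predU1P[/eqP|xU]].
    by rewrite (negbTE xi).
  apply: contra (rejU x _) => [xiSF|]; last by rewrite inE xS.
  by apply: F_sub xiSF; rewrite setUCA subsetUr.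
- exact: subset_trans sSU (subsetUr _ _).
- move=> x; rewrite inE in_setU1 => /andP[xS /predU1P[->|xU]]; first by rewrite iSF.
  by apply: rejU; rewrite inE xS.
Qed.

Lemma greedy_output_basis SG I :
  greedy_output F f SG -> I \in F -> (#|I| <= #|SG|)%N.
Proof.
move=> /greedy_reach_indep[SGF _ rejT] IF; rewrite leqNgt; apply/negP => ltSGI.
case: F_matroid => _ _ exchange.
have [w] := exchange _ _ SGF IF ltSGI; rewrite inE => /andP[wSG _].
by apply/negP/rejT; rewrite !inE wSG.
Qed.

Definition greedy_bound S :=
  forall I, I \in F -> (#|I| <= #|S|)%N ->
  forall Y, S \subset Y -> g * rho f I Y <= f S - f set0.

Lemma greedy_bound_exchange S U i :
  S \in F -> (forall x, x \in U :\: S -> x |: S \notin F) ->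
  (forall j, j \notin U -> rho1 f j S <= rho1 f i S) ->
  greedy_bound S -> forall I, I \in F -> #|I| = #|S|.+1 ->
  forall Y, i |: S \subset Y -> g * rho f I Y <= f (i |: S) - f set0.
Proof.
move=> SF rejU i_max boundS I IF cardI Y sSY.
case: F_matroid => _ F_sub exchange.
have ltSI : (#|S| < #|I|)%N by rewrite cardI.
have [o] := exchange _ _ SF IF ltSI; rewrite inE => /andP[oS oI oSF].
have oU : o \notin U by apply: contraL oSF => oU; apply: rejU; rewrite inE oS.
have cardIo : #|I :\ o| = #|S| by move: cardI; rewrite (cardsD1 o I) oI => -[].
have sSY' : S \subset Y := subset_trans (subsetUr _ _) sSY.
have boundIo := boundS _ (F_sub _ _ (subsetDl I [set o]) IF) (eq_leq cardIo) _ sSY'.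
have := f_g S (Y :|: I :\ o) o.
rewrite (setUidPr (subset_trans sSY' (subsetUl _ _))) => ratio_o.
have eYI : Y :|: I = (Y :|: I :\ o) :|: [set o].
  by rewrite -setUA [_ :|: [set o]]setUC setD1K.
move: ratio_o (i_max o oU) boundIo; rewrite /rho1 /rho eYI [i |: S]setUC; lra.
Qed.

Lemma greedy_bound_step S U i :
  S \in F -> S \subset U -> (forall x, x \in U :\: S -> x |: S \notin F) ->
  i \notin U -> (forall j, j \notin U -> rho1 f j S <= rho1 f i S) ->
  greedy_bound S -> greedy_bound (i |: S).
Proof.
move=> SF sSU rejU iU i_max boundS I IF.
have iS : i \notin S by apply: contra iU; apply: (subsetP sSU).
rewrite cardsU1 iS add1n leq_eqVlt ltnS => /predU1P[cardI|leIS] Y sSY.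
  exact: greedy_bound_exchange SF rejU i_max boundS I IF cardI Y sSY.
have := boundS I IF leIS Y (subset_trans (subsetUr _ _) sSY).
have := nondecreasing_subset f_nd (subsetUr [set i] S); lra.
Qed.

Lemma greedy_reach_bound S U : greedy_reach F f S U -> greedy_bound S.
Proof.
elim=> [I _|{}S {}U i reachSU boundS iU i_max].
  rewrite cards0 leqn0 cards_eq0 => /eqP-> Y _.
  by rewrite /rho setU0 !subrr mulr0.
have [SF sSU rejU] := greedy_reach_indep reachSU.
case: ifP => _ //; exact: greedy_bound_step SF sSU rejU iU i_max boundS.
Qed.

End Greedy.

End GreedyMatroid.

Theorem theorem2 (R : realFieldType) (T : finType) (F : {set {set T}}) (K : nat)
  (f : {set T} -> R) (gamma : R) (Sstar SG : {set T}) :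
  is_matroid F ->
  max_indep_card F K ->
  nondecreasing_setfun f ->
  is_submodularity_ratio f gamma ->
  Sstar \in F -> (forall S, S \in F -> f S <= f Sstar) ->
  greedy_output F f SG ->
  f Sstar != f set0 ->
  gamma ^+ 3 / (gamma ^+ 3 + 1) <= (f SG - f set0) / (f Sstar - f set0).
Proof.
move=> F_matroid _ f_nd [gamma_ge0 f_gamma _] SstarF _ SG_out f_nonconst.
have gamma_le1 := subm_ratio_le1 f_nd f_gamma f_nonconst.
have bound_Sstar : gamma * rho f Sstar SG <= f SG - f set0.
  have boundSG := greedy_reach_bound F_matroid f_nd f_gamma SG_out.
  exact: boundSG _ SstarF (greedy_output_basis F_matroid SG_out SstarF) _ (subxx SG).
have le_Sstar : f Sstar <= f (SG :|: Sstar).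
  by apply: nondecreasing_subset f_nd _; rewrite subsetUr.
have f0_lt : f set0 < f Sstar.
  by rewrite lt_neqAle eq_sym f_nonconst (nondecreasing_subset f_nd) ?sub0set.
apply: ratio_ge_cube; rewrite ?gamma_ge0 ?gamma_le1 ?subr_gt0 //.
apply: le_trans bound_Sstar; apply: ler_wpM2l => //; rewrite /rho; lra.
Qed.
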